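(* Let $W_N$ be the Weyl algebra generated by the entries of $N\times N$ matrices $X=\|x_i^j\|$ and $D=\|\partial/\partial x_j^i\|$, which satisfy $X_1X_2=X_2X_1$, $D_1D_2=D_2D_1$, $D_1X_2=X_2D_1+P_{12}$, and let $L=XD$. Then for every integer $n\ge 1$, in $Mat_{N\times N}(\mathbb{C})^{\otimes n}\otimes W_N$, $$L_1(L_2-j_2)\cdots(L_n-j_n)=X_1\cdots X_n\,D_1\cdots D_n,$$ where $j_k=\sum_{i=1}^{k-1}P_{ik}$.
   Context: For a matrix $A$ with entries in an algebra, $A_i=\mathbb{E}\otimes\cdots\otimes A\otimes\cdots\otimes\mathbb{E}$ with $A$ in the $i$-th tensor factor and the identity matrix $\mathbb{E}$ elsewhere. $P_{ik}$ denotes the permutation matrix acting in tensor factors $i$ and $k$, with $P_{kl}^{mn}=\delta_k^n\delta_l^m$. The elements $j_k$ are the images of the Jucys–Murphy elements of $\mathbb{C}[S_n]$. The map sending the generators of $U(\mathbf{gl}_N)$ to the entries of $XD$ embeds $U(\mathbf{gl}_N)$ into $W_N$. *)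

From HB Require Import structures.
From mathcomp Require Import all_boot all_order all_algebra.
Set Implicit Arguments. Unset Strict Implicit. Unset Printing Implicit Defensive.
Import GRing.Theory.
Local Open Scope ring_scope.

(* Elements of Mat_{NxN}^{(x) n} (x) A are represented as "matrices" whose
   rows/columns are indexed by multi-indices a : {ffun 'I_n -> 'I_N}
   (a k = index in the k-th tensor factor, factors numbered 0..n-1),
   with entries in the algebra A. *)
Notation idx N n := {ffun 'I_n -> 'I_N}.
Definition op (A : pzRingType) (N n : nat) := idx N n -> idx N n -> A.

Definition opmul (A : pzRingType) (N n : nat) (F G : op A N n) : op A N n :=
  fun a b => \sum_(c : idx N n) F a c * G c b.

Definition opone (A : pzRingType) (N n : nat) : op A N n :=
  fun a b => (a == b)%:R.

Definition opsub (A : pzRingType) (N n : nat) (F G : op A N n) : op A N n :=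
  fun a b => F a b - G a b.

Definition opprod (A : pzRingType) (N n : nat) (s : seq 'I_n)
  (F : 'I_n -> op A N n) : op A N n :=
  foldr (fun k acc => opmul (F k) acc) (@opone A N n) s.

(* M_i = E (x) ... (x) M (x) ... (x) E, M in the i-th factor *)
Definition emb (A : pzRingType) (N n : nat) (i : 'I_n) (M : 'I_N -> 'I_N -> A)
  : op A N n :=
  fun a b => M (a i) (b i) * (\prod_(k < n | k != i) (a k == b k))%:R.

Definition permop (A : pzRingType) (N n : nat) (i k : 'I_n) : op A N n :=
  fun a b => [&& a i == b k, a k == b i &
               [forall l : 'I_n, (l != i) && (l != k) ==> (a l == b l)]]%:R.

Definition jmat (A : pzRingType) (N n : nat) (k : 'I_n) : op A N n :=
  fun a b => \sum_(i < n | (i < k)%N) @permop A N n i k a b.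

Definition Lmat (A : pzRingType) (N : nat) (X D : 'I_N -> 'I_N -> A) :
  'I_N -> 'I_N -> A :=
  fun r c => \sum_(m < N) X r m * D m c.

(* Defining relations of the Weyl algebra W_N, written entrywise:
   X_1 X_2 = X_2 X_1,  D_1 D_2 = D_2 D_1,  D_1 X_2 = X_2 D_1 + P_12
   in Mat^{(x)2} (x) A; entry ((a1,a2),(b1,b2)) of D_1 X_2 is
   D a1 b1 * X a2 b2, of P_12 is delta(a1,b2) delta(a2,b1). *)
Definition weyl_rel (A : pzRingType) (N : nat) (X D : 'I_N -> 'I_N -> A) : Prop :=
  [/\ (forall a1 b1 a2 b2, X a1 b1 * X a2 b2 = X a2 b2 * X a1 b1),
      (forall a1 b1 a2 b2, D a1 b1 * D a2 b2 = D a2 b2 * D a1 b1) &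
      (forall a1 b1 a2 b2,
         D a1 b1 * X a2 b2 = X a2 b2 * D a1 b1 + ((a1 == b2) && (a2 == b1))%:R)].

From mathcomp Require Import all_boot all_algebra perm.

(* Identify an element of Mat^(x)n (x) A with the square matrix over A whose rows
   and columns are indexed by multi-indices (opmx); the product of the statement
   becomes a product in a ring, where only four relations matter:
     D_i X_m = X_m D_i + P_im (i <> m),   D_i D_m = D_m D_i,
     P_im D_l = D_l P_im (l <> i, m),     P_im D_m = D_i P_im.
   Pushing X_m to the left through D_1 ... D_(m-1) with the first relation and
   collecting the P's with the last two gives
     D_1 ... D_(m-1) X_m D_m = X_m D_1 ... D_m + D_1 ... D_(m-1) j_m,
   so right multiplication of X_1 ... X_(m-1) D_1 ... D_(m-1) by L_m - j_m yields
   X_1 ... X_m D_1 ... D_m, and the theorem follows by induction on m. *)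

Set Implicit Arguments. Unset Strict Implicit.
Import GRing.Theory.
Local Open Scope ring_scope.

Section JucysMurphyProduct.
Variables (R : pzRingType) (n : nat) (x d : nat -> R) (p : nat -> nat -> R).
Hypothesis d_x : forall i m, (i < m < n)%N -> d i * x m = x m * d i + p i m.
Hypothesis d_d : forall i m, (i < m < n)%N -> d i * d m = d m * d i.
Hypothesis p_d :
  forall i l m, (i < l < m)%N -> (m < n)%N -> p i m * d l = d l * p i m.
Hypothesis p_dR : forall i m, (i < m < n)%N -> p i m * d m = d i * p i m.

Local Notation dprod t := (\prod_(0 <= k < t) d k).
Local Notation xprod t := (\prod_(0 <= k < t) x k).
Local Notation psum t m := (\sum_(0 <= i < t) p i m).

Lemma psum_d_comm t m : (t < m < n)%N -> psum t m * d t = d t * psum t m.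
Proof.
case/andP=> lt_tm lt_mn; rewrite mulr_suml mulr_sumr.
by apply: eq_big_nat => i /andP[_ lt_it]; rewrite p_d ?lt_it.
Qed.

Lemma dprod_x_d t m : (t <= m)%N -> (m < n)%N ->
  dprod t * x m * d m = x m * dprod t * d m + dprod t * psum t m.
Proof.
move=> + lt_mn; elim: t => [_|t IHt lt_tm].
  by rewrite !big_geq // mulr1 mul1r mulr0 addr0.
have lt_tmn : (t < m < n)%N by rewrite lt_tm.
have move_dt : dprod t * d t * x m * d m =
    dprod t * x m * d m * d t + dprod t * d t * p t m.
  rewrite -(mulrA _ (d t)) (d_x lt_tmn) mulrDr mulrDl -!mulrA.
  by rewrite (d_d lt_tmn) (p_dR lt_tmn).
rewrite !big_nat_recr //= move_dt (IHt (ltnW lt_tm)) mulrDl -!mulrA.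
by rewrite (psum_d_comm lt_tmn) (d_d lt_tmn) !mulrDr addrA.
Qed.

Lemma prod_xd_sub_psum m : (m <= n)%N ->
  \prod_(0 <= k < m) (x k * d k - psum k k) = xprod m * dprod m.
Proof.
elim: m => [_|m IHm lt_mn]; first by rewrite !big_geq // mulr1.
rewrite !big_nat_recr //= (IHm (ltnW lt_mn)) mulrBr.
have := dprod_x_d (leqnn m) lt_mn; rewrite -!mulrA => ->.
by rewrite mulrDr addrK.
Qed.

End JucysMurphyProduct.

Section OpMatrix.
Variables (A : pzRingType) (N n : nat).

Definition opmx (F : op A N n) : 'M[A]_#|idx N n| :=
  \matrix_(i, j) F (enum_val i) (enum_val j).

Lemma opmxE F a b : opmx F (enum_rank a) (enum_rank b) = F a b.
Proof. by rewrite mxE !enum_rankK. Qed.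

Lemma opmx_inj F G : opmx F = opmx G -> F =2 G.
Proof. by move=> eqFG a b; rewrite -!opmxE eqFG. Qed.

Lemma opmx_eq F G : F =2 G -> opmx F = opmx G.
Proof. by move=> eqFG; apply/matrixP=> i j; rewrite !mxE eqFG. Qed.

Lemma opmx_mul F G : opmx (opmul F G) = opmx F * opmx G.
Proof.
apply/matrixP=> i j; rewrite -mulmxE !mxE /opmul.
rewrite (reindex (@enum_val _ (mem (idx N n)))) /=; last first.
  by exists enum_rank => c _; [rewrite enum_valK | rewrite enum_rankK].
by apply: eq_bigr => c _; rewrite !mxE.
Qed.

Lemma opmx_one : opmx (@opone A N n) = 1.
Proof. by apply/matrixP=> i j; rewrite !mxE /opone (inj_eq enum_val_inj). Qed.

Lemma opmx_sub F G : opmx (opsub F G) = opmx F - opmx G.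
Proof. by apply/matrixP=> i j; rewrite !mxE. Qed.

Lemma opmx_opprod s F : opmx (opprod s F) = \prod_(k <- s) opmx (F k).
Proof.
elim: s => [|k s IHs]; first by rewrite big_nil opmx_one.
by rewrite big_cons /= opmx_mul IHs.
Qed.

Lemma opmx_jmat k :
  opmx (jmat A k) = \sum_(i < n | (i < k)%N) opmx (@permop A N n i k).
Proof.
apply/matrixP=> a b; rewrite !mxE summxE.
by apply: eq_bigr => i _; rewrite mxE.
Qed.

End OpMatrix.

Section Entries.
Variables (A : pzRingType) (N n : nat).
Implicit Types (S : {set 'I_n}) (i k l : 'I_n) (a b c : idx N n).
Implicit Types (F G : 'I_N -> 'I_N -> A).

Lemma sum_delta_mull (T : finType) (c0 : T) (f : T -> A) :
  \sum_c (c == c0)%:R * f c = f c0.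
Proof.
by rewrite (bigD1 c0) //= eqxx mul1r big1 ?addr0 // => c /negbTE->; rewrite mul0r.
Qed.

Lemma sum_delta_mulr (T : finType) (c0 : T) (f : T -> A) :
  \sum_c f c * (c == c0)%:R = f c0.
Proof.
by rewrite (bigD1 c0) //= eqxx mulr1 big1 ?addr0 // => c /negbTE->; rewrite mulr0.
Qed.

Definition agree_off S a b := [forall j, (j \notin S) ==> (a j == b j)].

Lemma agree_offP S a b :
  reflect (forall j, j \notin S -> a j = b j) (agree_off S a b).
Proof.
apply: (iffP forallP) => off j; last by apply/implyP => /off->.
by move=> jS; apply/eqP; move: (off j); rewrite jS.
Qed.

Definition upd a k (m : 'I_N) : idx N n :=
  [ffun j => if j == k then m else a j].

Lemma agree_off_updr a k m : agree_off [set k] a (upd a k m).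
Proof. by apply/agree_offP=> j; rewrite in_set1 ffunE => /negbTE->. Qed.

Lemma upd_agree_off a c k : agree_off [set k] a c -> upd a k (c k) = c.
Proof.
move/agree_offP=> off; apply/ffunP=> j; rewrite ffunE.
by case: eqP => [->|/eqP ne_jk] //; rewrite off // in_set1.
Qed.

Lemma agree_off_updl a b k m :
  agree_off [set k] (upd a k m) b = agree_off [set k] a b.
Proof.
by apply: eq_forallb => j; rewrite in_set1 ffunE; case: eqP.
Qed.

Lemma agree_off_updl_neq a b k l m : k != l ->
  agree_off [set l] (upd a k m) b = (m == b k) && agree_off [set k; l] a b.
Proof.
move=> ne_kl; apply/agree_offP/andP => [off | [/eqP-> /agree_offP off] j].
  split; first by move: (off k); rewrite in_set1 ffunE eqxx => ->.
  apply/agree_offP => j; rewrite !inE negb_or => /andP[ne_jk ne_jl].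
  by rewrite -off ?in_set1 // ffunE (negbTE ne_jk).
rewrite in_set1 ffunE => ne_jl; case: eqP => [->|/eqP ne_jk] //.
by rewrite off // !inE negb_or ne_jk.
Qed.

Lemma embE k F a b : emb k F a b = F (a k) (b k) * (agree_off [set k] a b)%:R.
Proof.
rewrite /emb -(big_morph _ (fun u v => esym (mulnb u v)) (id2 := true) erefl).
rewrite big_andE.
by congr (_ * (nat_of_bool _)%:R); apply: eq_forallb => j; rewrite in_set1.
Qed.

Lemma emb_mulE k F (H : op A N n) a b :
  opmul (emb k F) H a b = \sum_m F (a k) m * H (upd a k m) b.
Proof.
(* only the [c] agreeing with [a] off [k] contribute; they are indexed by [c k] *)
rewrite /opmul -(big_rmcond _ _ (P := agree_off [set k] a)); last first.
  by move=> c /negbTE off_ac; rewrite embE off_ac mulr0 mul0r.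
rewrite (reindex_onto (upd a k) (fun c => c k)) /=; last first.
  by move=> c /upd_agree_off.
apply: eq_big => [m|m _]; first by rewrite agree_off_updr ffunE !eqxx.
by rewrite embE agree_off_updr ffunE eqxx mulr1.
Qed.

Lemma emb_mul_emb k F G : opmul (emb k F) (emb k G) =2 emb k (Lmat F G).
Proof.
move=> a b; rewrite emb_mulE embE /Lmat mulr_suml.
by apply: eq_bigr => m _; rewrite embE ffunE eqxx agree_off_updl mulrA.
Qed.

Lemma emb_mul_emb_neq k l F G a b : k != l ->
  opmul (emb k F) (emb l G) a b =
  F (a k) (b k) * G (a l) (b l) * (agree_off [set k; l] a b)%:R.
Proof.
move=> ne_kl; rewrite emb_mulE (bigD1 (b k)) //= big1 ?addr0 => [|m ne_m];
  rewrite embE ffunE eq_sym (negbTE ne_kl) agree_off_updl_neq //.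
  by rewrite eqxx mulrA.
by rewrite (negbTE ne_m) mulr0n !mulr0.
Qed.

Lemma permopE i k a b : permop A i k a b =
  [&& a i == b k, a k == b i & agree_off [set i; k] a b]%:R.
Proof.
by congr ([&& _, _ & _]%:R); apply: eq_forallb => j; rewrite !inE negb_or.
Qed.

Definition tswap i k a : idx N n := [ffun j => a (tperm i k j)].

Lemma tswapK i k : involutive (tswap i k).
Proof. by move=> a; apply/ffunP=> j; rewrite !ffunE tpermK. Qed.

Lemma eq_tswap i k a b : (b == tswap i k a) = (a == tswap i k b).
Proof. by rewrite -(inj_eq (can_inj (tswapK i k))) tswapK eq_sym. Qed.

Lemma permop_tswap i k a b : permop A i k a b = (b == tswap i k a)%:R.
Proof.
rewrite permopE; congr ((_ : bool)%:R).
apply/and3P/eqP => [[/eqP aik /eqP aki off]|->].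
  apply/ffunP => j; rewrite ffunE; case: tpermP => [->|->|ne_ji ne_jk] //.
  apply/esym/(agree_offP _ _ _ off); rewrite !inE negb_or.
  by apply/andP; split; apply/eqP.
rewrite !ffunE tpermL tpermR !eqxx; split=> //.
apply/agree_offP => j; rewrite !inE negb_or => /andP[ne_ji ne_jk].
by rewrite ffunE tpermD // eq_sym.
Qed.

Lemma agree_off_tswap i k l a b :
  agree_off [set l] (tswap i k a) b = agree_off [set tperm i k l] a (tswap i k b).
Proof.
apply/agree_offP/agree_offP => off j; rewrite in_set1 => ne_j.
  rewrite ffunE -off ?ffunE ?tpermK // in_set1.
  by apply: contra ne_j => /eqP <-; rewrite tpermK.
rewrite ffunE off ?ffunE ?tpermK // in_set1.
by apply: contra ne_j => /eqP/(can_inj (tpermK i k))->.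
Qed.

Lemma permop_mul_emb i k l G :
  opmul (permop A i k) (emb l G) =2 opmul (emb (tperm i k l) G) (permop A i k).
Proof.
move=> a b; rewrite /opmul.
under eq_bigr do rewrite permop_tswap.
under [RHS]eq_bigr do rewrite permop_tswap eq_tswap.
by rewrite sum_delta_mull sum_delta_mulr !embE !ffunE tpermK agree_off_tswap.
Qed.

End Entries.

Section OpMatrixRelations.
Variables (A : pzRingType) (N n : nat).
Implicit Types (i k l m : 'I_n) (F G : 'I_N -> 'I_N -> A).

Lemma opmx_emb_mul k F G :
  opmx (emb k F) * opmx (emb k G) = opmx (emb k (Lmat F G)).
Proof. by rewrite -opmx_mul; apply/opmx_eq/emb_mul_emb. Qed.

Lemma opmx_emb_comm k l F G : k != l ->
    (forall r c r' c', F r c * G r' c' = G r' c' * F r c) ->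
  opmx (emb k F) * opmx (emb l G) = opmx (emb l G) * opmx (emb k F).
Proof.
move=> ne_kl FG; rewrite -!opmx_mul; apply: opmx_eq => a b.
by rewrite emb_mul_emb_neq // emb_mul_emb_neq 1?eq_sym // FG setUC.
Qed.

Lemma opmx_emb_weyl k m F G : k != m ->
    (forall r c r' c',
       F r c * G r' c' = G r' c' * F r c + ((r == c') && (r' == c))%:R) ->
  opmx (emb k F) * opmx (emb m G) =
    opmx (emb m G) * opmx (emb k F) + opmx (permop A k m).
Proof.
move=> ne_km FG; rewrite -!opmx_mul; apply/matrixP => i j; rewrite !mxE.
rewrite emb_mul_emb_neq // emb_mul_emb_neq 1?eq_sym // FG permopE setUC.
by rewrite mulrDl -natrM mulnb andbA.
Qed.

Lemma opmx_permop_emb i k l G :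
  opmx (permop A i k) * opmx (emb l G) =
    opmx (emb (tperm i k l) G) * opmx (permop A i k).
Proof. by rewrite -!opmx_mul; apply/opmx_eq/permop_mul_emb. Qed.

End OpMatrixRelations.

Lemma prod_enum_inord (R : pzRingType) n (F : 'I_n.+1 -> R) :
  \prod_(k <- enum 'I_n.+1) F k = \prod_(0 <= k < n.+1) F (inord k).
Proof.
rewrite /index_iota subn0 -val_enum_ord big_map.
by apply: eq_bigr => k _; rewrite inord_val.
Qed.

Lemma opmx_jmat_inord (A : pzRingType) N n k : (k < n.+1)%N ->
  opmx (jmat A (inord k : 'I_n.+1)) =
    \sum_(0 <= i < k) opmx (@permop A N n.+1 (inord i) (inord k)).
Proof.
move=> lt_kn; rewrite opmx_jmat (big_nat_widen 0 k n.+1) ?(ltnW lt_kn) // big_mkord.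
by apply: eq_big => [i|i _]; rewrite ?inordK ?inord_val.
Qed.

Theorem mainTheorem2 (A : pzRingType) (N n : nat) (X D : 'I_N -> 'I_N -> A) :
  weyl_rel X D -> (0 < n)%N ->
  forall a b : {ffun 'I_n -> 'I_N},
    opprod (enum 'I_n)
      (fun k => opsub (emb k (Lmat X D)) (@jmat A N n k)) a b =
    opmul (opprod (enum 'I_n) (fun k => emb k X))
          (opprod (enum 'I_n) (fun k => emb k D)) a b.
Proof.
case=> _ D_comm D_X; case: n => // n _; apply: opmx_inj.
rewrite opmx_mul !opmx_opprod !prod_enum_inord.
pose x k := opmx (emb (inord k : 'I_n.+1) X).
pose d k := opmx (emb (inord k : 'I_n.+1) D).
pose p i k := opmx (@permop A N n.+1 (inord i) (inord k)).
have inord_neq i k : (i < k < n.+1)%N -> (inord i : 'I_n.+1) != inord k.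
  case/andP=> lt_ik lt_kn.
  by rewrite -val_eqE /= !inordK ?ltn_eqF // (ltn_trans lt_ik).
transitivity (\prod_(0 <= k < n.+1) (x k * d k - \sum_(0 <= i < k) p i k)).
  apply: eq_big_nat => k /andP[_ lt_kn].
  by rewrite opmx_sub -opmx_emb_mul opmx_jmat_inord.
apply: (@prod_xd_sub_psum _ n.+1) => //
  [i m lt_imn | i m lt_imn | i l m lt_ilm lt_mn | i m lt_imn].
- exact: opmx_emb_weyl (inord_neq _ _ lt_imn) D_X.
- exact: opmx_emb_comm (inord_neq _ _ lt_imn) D_comm.
- case/andP: lt_ilm => lt_il lt_lm.
  have lt_ln := ltn_trans lt_lm lt_mn.
  rewrite /p /d opmx_permop_emb tpermD //.
    by apply: (inord_neq i l); rewrite lt_il.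
  by rewrite eq_sym; apply: (inord_neq l m); rewrite lt_lm.
- by rewrite /p /d opmx_permop_emb tpermR.
Qed.
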